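(* Let $(x,y)$ be a random pair with values in $\mathcal{X}\times\{-1,+1\}$ with some distribution $P$ (so $\Pr\{x\in\mathcal{X}\}=1$). Let $f_\theta:\mathcal{X}\times\mathbb{R}\to\mathbb{R}$ satisfy the scalable-classifier assumption, and let $\bar\rho(x)$ denote the unique solution of $f_\theta(x,\bar\rho(x))=0$. Let $\mathcal{Z}_c=\{(x_i,y_i)\}_{i=1}^{n_c}$ be $n_c$ i.i.d. samples from $P$. Let $\varepsilon,\delta\in(0,1)$ and let $r$ be an integer with $1\le r\le n_c$ and $$\mathbf{B}(r-1;n_c,\varepsilon)\le\delta.$$ Let $\{\tilde x^U_j\}_{j=1}^{n_U}$ be the feature vectors of all samples in $\mathcal{Z}_c$ with label $-1$ (listed with multiplicity), define, when $n_U\ge r$, $$\rho_\varepsilon=\max{}^{(r)}\big(\{\bar\rho(\tilde x^U_j)\}_{j=1}^{n_U}\big),$$ and define $\mathcal{S}_\varepsilon=\{x\in\mathcal{X}: f_\theta(x,\rho_\varepsilon)<0\}$ if $n_U\ge r$ and $\mathcal{S}_\varepsilon=\mathcal{X}$ otherwise. Then, with probability at least $1-\delta$ with respect to the draw of $\mathcal{Z}_c$, $$\Pr_{(x,y)\sim P}\{y=-1\ \text{and}\ x\in\mathcal{S}_\varepsilon\}\le\varepsilon,$$ where $(x,y)$ is drawn independently of $\mathcal{Z}_c$.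
   Context: Scalable-classifier assumption: for every $x\in\mathcal{X}$, the map $\rho\mapsto f_\theta(x,\rho)$ is continuous and strictly increasing, and $\lim_{\rho\to-\infty}f_\theta(x,\rho)<0<\lim_{\rho\to+\infty}f_\theta(x,\rho)$ (under this assumption $\bar\rho(x)$ exists and is unique). Binomial CDF: $\mathbf{B}(k;n,\varepsilon)=\sum_{i=0}^{k}\binom{n}{i}\varepsilon^i(1-\varepsilon)^{n-i}$. Generalized max: for a finite collection $\Gamma=\{\gamma_i\}_{i=1}^n$ of reals and integer $r\in\{1,\dots,n\}$, order it as $\gamma_{(1)}\ge\gamma_{(2)}\ge\dots\ge\gamma_{(n)}$ and set $\max^{(r)}(\Gamma)=\gamma_{(r)}$ (the $r$-th largest value, counting multiplicity). *)

From HB Require Import structures.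
From mathcomp Require Import all_boot all_order all_algebra.
From mathcomp Require Import all_classical all_reals all_analysis.
Set Implicit Arguments. Unset Strict Implicit. Unset Printing Implicit Defensive.
Import Order.TTheory GRing.Theory Num.Theory.
Import numFieldNormedType.Exports.
Local Open Scope classical_set_scope.
Local Open Scope ring_scope.

(* Labels {-1,+1} are encoded by bool: true = +1, false = -1. *)

Definition scalable_classifier {R : realType} {X : Type} (f : X -> R -> R) : Prop :=
  forall x : X,
    continuous (f x) /\
    {homo f x : a b / a < b} /\
    exists l1 l2 : \bar R,
      ((f x r)%:E @[r --> -oo] --> l1) /\ ((f x r)%:E @[r --> +oo] --> l2) /\
      (l1 < 0)%E /\ (0 < l2)%E.

Definition rho_bar {R : realType} {X : Type} (f : X -> R -> R) (x : X) : R :=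
  xget 0 [set r | f x r = 0].

Definition binom_cdf {R : realType} (k n : nat) (eps : R) : R :=
  \sum_(i < k.+1) ('C(n, i))%:R * eps ^+ i * (1 - eps) ^+ (n - i).

(* Generalized max: r-th largest element (counting multiplicity), 1 <= r <= size s. *)
Definition gen_max {R : realType} (r : nat) (s : seq R) : R :=
  nth 0 (sort (fun a b : R => b <= a) s) r.-1.

Definition iid_sample {R : realType} {d d' : measure_display}
  {X : measurableType d} {Omega : measurableType d'} (n : nat)
  (Q : probability Omega R) (P : probability (X * bool)%type R)
  (Z : 'I_n -> Omega -> (X * bool)%type) : Prop :=
  (forall i, measurable_fun setT (Z i)) /\
  forall A : 'I_n -> set (X * bool)%type, (forall i, measurable (A i)) ->
    Q (\bigcap_i (Z i @^-1` A i)) = (\prod_(i < n) P (A i))%E.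

Definition neg_scores {R : realType} {X Omega : Type} (n : nat) (f : X -> R -> R)
  (Z : 'I_n -> Omega -> (X * bool)%type) (w : Omega) : seq R :=
  [seq rho_bar f (Z i w).1 | i <- enum 'I_n & ~~ (Z i w).2].

Definition S_eps {R : realType} {X Omega : Type} (n r : nat) (f : X -> R -> R)
  (Z : 'I_n -> Omega -> (X * bool)%type) (w : Omega) : set X :=
  if (r <= size (neg_scores f Z w))%N
  then [set x | f x (gen_max r (neg_scores f Z w)) < 0]
  else setT.

From HB Require Import structures.
From mathcomp Require Import all_boot all_order all_algebra.
From mathcomp Require Import all_classical all_reals all_analysis.
From mathcomp Require Import ring lra.
Import Order.TTheory GRing.Theory Num.Theory.
Import numFieldNormedType.Exports.
Set Implicit Arguments.
Unset Strict Implicit.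
Unset Printing Implicit Defensive.
Local Open Scope classical_set_scope.
Local Open Scope ring_scope.

(* The scores [rho_bar f x] turn the threshold rule into a quantile problem:
   [x] lies in [S_eps] iff its score exceeds [rho_eps], the [r]-th largest score
   of the label [-1] samples.  Let [t] be the [eps]-quantile of the label [-1]
   scores under [P], i.e. the least threshold with P(y = -1, score > t) <= eps
   (if P(y = -1) <= eps there is nothing to prove); by continuity of [P] it
   exists, and A = {y = -1, score >= t} has P(A) >= eps.
   Each sample falls in [A] independently with probability P(A), so fewer than
   [r] of them do with probability at most B(r-1; n_c, P(A)) <= B(r-1; n_c, eps)
   <= delta.  On the complementary event [rho_eps >= t], hence
   P(y = -1, x in S_eps) <= P(y = -1, score > t) <= eps. *)

Lemma cvg_open_ex {T : Type} {U : topologicalType} (F : set_system T)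
    {PF : ProperFilter F} (g : T -> U) (l : U) (A : set U) :
  g @ F --> l -> open A -> A l -> exists t, A (g t).
Proof.
move=> gl oA Al; apply: (@filter_ex _ F); apply: (gl A).
exact: open_nbhs_nbhs.
Qed.

Section scalable_classifier.
Variables (R : realType) (X : Type) (f : X -> R -> R).
Hypothesis hf : scalable_classifier f.

Lemma rho_bar_root x : f x (rho_bar f x) = 0.
Proof.
have [cf [homf [l1 [l2 [cvl1 [cvl2 [l1_lt0 l2_gt0]]]]]]] := hf x.
suff ex0 : exists c, f x c = 0 by exact: (xgetPex 0 ex0).
have [a fa] : exists a, f x a < 0.
  have [|a] := @cvg_open_ex _ _ _ _ _ _ `]-oo, 0%E[ cvl1 (lray_open _).
    by rewrite /= in_itv.
  by rewrite /= in_itv /= lte_fin; exists a.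
have [b fb] : exists b, 0 < f x b.
  have [|b] := @cvg_open_ex _ _ _ _ _ _ `]0%E, +oo[ cvl2 (rray_open _).
    by rewrite /= in_itv /= andbT.
  by rewrite /= in_itv /= andbT lte_fin; exists b.
have ab : a <= b.
  rewrite leNgt; apply/negP => /homf ba.
  by have := lt_trans fa (lt_trans fb ba); rewrite ltxx.
have [|c _ fc] := @IVT R (f x) a b 0 ab (continuous_subspaceT cf).
  by rewrite ge_min le_max (ltW fa) (ltW fb) orbT.
by exists c.
Qed.

Lemma lt0_rho_bar x t : (f x t < 0) = (t < rho_bar f x).
Proof.
have [_ [homf _]] := hf x; rewrite -{1}(rho_bar_root x).
apply/idP/idP => [ft|/homf//]; rewrite ltNge; apply/negP; rewrite le_eqVlt.
by case/orP=> [/eqP e|/homf]; [rewrite e ltxx in ft|move/(lt_trans ft); rewrite ltxx].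
Qed.

End scalable_classifier.

Section binomial_cdf.
Variable R : realType.
Implicit Types (p q : R) (k n : nat).

Lemma binom_cdf0n k p : binom_cdf k 0 p = 1.
Proof.
rewrite /binom_cdf big_ord_recl /= bin0 sub0n !expr0 !mulr1.
by rewrite big1 ?addr0 // => i _; rewrite bin_small // !mul0r.
Qed.

Lemma binom_cdf0S n p : binom_cdf 0 n.+1 p = (1 - p) * binom_cdf 0 n p.
Proof. by rewrite /binom_cdf !big_ord_recl !big_ord0 /= !bin0 !subn0 exprS; ring. Qed.

Lemma binom_cdfSS k n p :
  binom_cdf k.+1 n.+1 p = p * binom_cdf k n p + (1 - p) * binom_cdf k.+1 n p.
Proof.
rewrite /binom_cdf big_ord_recl [X in _ = _ + _ * X]big_ord_recl /= !bin0 !subn0.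
under eq_bigr => i _ do rewrite /bump /= add1n binS natrD subSS !mulrDl.
under [X in _ = _ + _ * (_ + X)]eq_bigr => i _ do rewrite /bump /= add1n.
rewrite big_split /= !mulr_sumr.
under [X in _ + (X + _) = _]eq_bigr => i _.
  have -> : 'C(n, i.+1)%:R * p ^+ i.+1 * (1 - p) ^+ (n - i) =
            (1 - p) * ('C(n, i.+1)%:R * p ^+ i.+1 * (1 - p) ^+ (n - i.+1)).
    case: (ltnP i n) => [ltin|lein]; last by rewrite bin_small ?ltnS // !mul0r mulr0.
    by rewrite -(subnSK ltin) [(1 - p) ^+ _.+1]exprS; ring.
  over.
under [X in _ + (_ + X) = _]eq_bigr => i _ do rewrite exprS mulrCA -!mulrA.
under [X in _ = X + _]eq_bigr => i _ do rewrite -!mulrA.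
rewrite -[X in _ + (X + _) = _]mulr_sumr exprS; ring.
Qed.

Lemma binom_cdf_ge0 k n p : 0 <= p <= 1 -> 0 <= binom_cdf k n p.
Proof.
case/andP=> p_ge0 p_le1; apply: sumr_ge0 => i _.
by rewrite !mulr_ge0 ?exprn_ge0 // subr_ge0.
Qed.

Lemma binom_cdf_leS k n p : 0 <= p <= 1 -> binom_cdf k n p <= binom_cdf k.+1 n p.
Proof.
case/andP=> p_ge0 p_le1; rewrite /binom_cdf [leRHS]big_ord_recr /= lerDl.
by rewrite !mulr_ge0 ?exprn_ge0 // subr_ge0.
Qed.

Lemma binom_cdf_le k n p q : 0 <= q -> q <= p -> p <= 1 ->
  binom_cdf k n p <= binom_cdf k n q.
Proof.
move=> q_ge0 qp p_le1.
have p01 : 0 <= p <= 1 by rewrite (le_trans q_ge0 qp).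
have q01 : 0 <= q <= 1 by rewrite q_ge0 (le_trans qp p_le1).
elim: n k => [|n IHn] [|k]; rewrite ?binom_cdf0n // ?binom_cdf0S ?binom_cdfSS.
  by apply: ler_pM; rewrite ?binom_cdf_ge0 ?IHn // ?subr_ge0 ?lerB.
have := IHn k; have := IHn k.+1; have := binom_cdf_leS k n q01.
have := binom_cdf_ge0 k n q01; have := binom_cdf_ge0 k.+1 n q01.
move: (binom_cdf k n p) (binom_cdf k.+1 n p) (binom_cdf k n q) (binom_cdf k.+1 n q).
move=> a b a' b' *; nra.
Qed.

Lemma binom_cdfE k n p :
  \sum_(S : {set 'I_n} | (#|S| <= k)%N) p ^+ #|S| * (1 - p) ^+ (n - #|S|)
  = binom_cdf k n p.
Proof.
rewrite (partition_big (fun S : {set 'I_n} => inord #|S| : 'I_k.+1) xpredT) //=.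
apply: eq_bigr => j _.
rewrite (eq_bigl (fun S : {set 'I_n} => #|S| == j)); last first.
  move=> S /=; apply/andP/eqP => [[S_le_k /eqP <-]|S_j]; first by rewrite inordK.
  by split; [rewrite S_j -ltnS | apply/eqP/val_inj; rewrite /= S_j inordK].
rewrite (eq_bigr (fun _ => p ^+ j * (1 - p) ^+ (n - j))); last by move=> S /eqP ->.
rewrite sumr_const -mulrA mulr_natl; congr (_ *+ _).
by rewrite -[in RHS](card_ord n) -card_draws cardsE.
Qed.

End binomial_cdf.

Lemma measure_bigsetU_le d (T : measurableType d) (R : realType)
    (mu : {measure set T -> \bar R}) (I : Type) (s : seq I) (P : pred I)
    (F : I -> set T) : (forall i, measurable (F i)) ->
  (mu (\big[setU/set0]_(i <- s | P i) F i) <= \sum_(i <- s | P i) mu (F i))%E.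
Proof.
move=> mF; elim: s => [|i s IHs]; first by rewrite !big_nil measure0.
rewrite !big_cons; case: (P i) => //.
apply: le_trans (measureU2 mu (mF i) _) _; last exact: leeD.
exact: bigsetU_measurable.
Qed.

Section iid_sample.
Variables (R : realType) (d d' : measure_display).
Variables (X : measurableType d) (Omega : measurableType d').
Variables (P : probability X R) (Q : probability Omega R).
Variables (n : nat) (Z : 'I_n -> Omega -> X).
Hypotheses (mZ : forall i, measurable_fun setT (Z i))
  (Z_indep : forall A : 'I_n -> set X, (forall i, measurable (A i)) ->
     Q (\bigcap_i (Z i @^-1` A i)) = (\prod_(i < n) P (A i))%E).
Variable A : set X.
Hypothesis mA : measurable A.

Let hits_exactly (S : {set 'I_n}) :=
  \bigcap_i Z i @^-1` (if i \in S then A else ~` A).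

Let measurable_hits_exactly S : measurable (hits_exactly S).
Proof.
apply: fin_bigcap_measurable; first exact: finite_finset.
move=> i _; rewrite -[_ @^-1` _]setTI; apply: mZ => //.
by case: (i \in S) => //; apply: measurableC.
Qed.

Let prob_hits_exactly S :
  Q (hits_exactly S) = (fine (P A) ^+ #|S| * (1 - fine (P A)) ^+ (n - #|S|))%:E.
Proof.
rewrite Z_indep; last by move=> i; case: (i \in S) => //; apply: measurableC.
have PA : P A = (fine (P A))%:E by rewrite fineK // fin_num_measure.
rewrite (eq_bigr (fun i => (if i \in S then fine (P A) else 1 - fine (P A))%:E)); last first.
  by move=> i _; case: (i \in S); rewrite // probability_setC // PA.
rewrite prodEFin (bigID (mem S)) /=.
rewrite (eq_bigr (fun _ => fine (P A))); last by move=> i ->.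
rewrite [X in _ * X](eq_bigr (fun _ => 1 - fine (P A))); last by move=> i /negbTE ->.
have card_notin : #|[pred i | i \notin S]| = (n - #|S|)%N.
  rewrite -[X in (X - _)%N](card_ord n) -(cardsC S) addKn.
  by apply: eq_card => i; rewrite !inE.
by rewrite !prodr_const card_notin.
Qed.

Lemma iid_sample_few_hits k :
  let few_hits := [set w | (#|[pred i | `[< A (Z i w) >]]| <= k)%N] in
  measurable few_hits /\ (Q few_hits <= (binom_cdf k n (fine (P A)))%:E)%E.
Proof.
move=> few_hits.
have -> : few_hits = \big[setU/set0]_(S : {set 'I_n} | (#|S| <= k)%N) hits_exactly S.
  apply/seteqP; split=> [w|w].
    move=> few_w; rewrite -bigcup_seq_cond; exists [set i | `[< A (Z i w) >]]%SET.
      by rewrite /= mem_index_enum cardsE.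
    by move=> i _ /=; rewrite inE; case: asboolP.
  rewrite -bigcup_seq_cond => -[S /= /andP[_ S_le_k] hitsS].
  rewrite /few_hits /=; apply: leq_trans S_le_k; apply: subset_leq_card.
  apply/fintype.subsetP => i /asboolP Ai; move: (hitsS i I) => /=.
  by case: (i \in S).
split; first exact: bigsetU_measurable.
apply: le_trans (measure_bigsetU_le _ _ _ measurable_hits_exactly) _.
rewrite (eq_bigr _ (fun S _ => prob_hits_exactly S)).
by rewrite sumEFin binom_cdfE.
Qed.

End iid_sample.

Section probability_limits.
Variables (R : realType) (d : measure_display) (T : measurableType d).
Variable P : probability T R.
Implicit Types (F : nat -> set T) (e : R).

Lemma probability_bigcup_le F e : (forall k, measurable (F k)) ->
  {homo F : m n / (m <= n)%N >-> m `<=` n} ->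
  (forall k, P (F k) <= e%:E)%E -> (P (\bigcup_k F k) <= e%:E)%E.
Proof.
move=> mF homF Fe.
have homF' : {homo F : m n / (m <= n)%N >-> (m <= n)%O}.
  by move=> m n /homF/subsetPset.
have cvF := nondecreasing_cvg_mu (mu:=P) mF (bigcup_measurable (fun k _ => mF k)) homF'.
rewrite -(cvg_lim _ cvF) //; apply: lime_le; first exact: cvgP cvF.
exact: nearW.
Qed.

Lemma probability_bigcap_ge F e : (forall k, measurable (F k)) ->
  {homo F : m n / (m <= n)%N >-> n `<=` m} ->
  (forall k, e%:E <= P (F k))%E -> (e%:E <= P (\bigcap_k F k))%E.
Proof.
move=> mF homF eF.
have F0_fin : (P (F 0%N) < +oo)%E.
  by rewrite (le_lt_trans (probability_le1 P (mF 0%N))) // ltry.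
have homF' : {homo F : m n / (m <= n)%N >-> (n <= m)%O}.
  by move=> m n /homF/subsetPset.
have cvF := nonincreasing_cvg_mu (mu:=P) F0_fin mF (bigcapT_measurable mF) homF'.
rewrite -(cvg_lim _ cvF) //; apply: lime_ge; first exact: cvgP cvF.
exact: nearW.
Qed.

End probability_limits.

Section quantile.
Variables (R : realType) (d : measure_display) (T : measurableType d).
Variables (P : probability T R) (D : set T) (g : T -> R).
Hypothesis measurable_above : forall t, measurable (D `&` [set x | t < g x]).

Let above t := D `&` [set x | t < g x].

Let above_antitone s t : s <= t -> above t `<=` above s.
Proof. by move=> st x [Dx tg]; split=> //; apply: le_lt_trans tg. Qed.

Let above_shift t : above t = \bigcup_k above (t + k.+1%:R^-1).
Proof.
apply/seteqP; split=> [x [Dx /ltr_add_invr[k tg]]|x [k _]]; first by exists k.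
by apply: above_antitone; rewrite lerDl.
Qed.

Lemma setI_ge_bigcap t :
  D `&` [set x | t <= g x] = \bigcap_k (D `&` [set x | t - k.+1%:R^-1 < g x]).
Proof.
apply/seteqP; split=> [x [Dx tg] k _|x Dtg]; first by split=> //=; rewrite ltrBlDr ltr_pwDr.
have [Dx _] := Dtg 0%N I; split=> //=; rewrite leNgt; apply/negP => /ltr_add_invr[k].
by rewrite -ltrBrDr => /lt_trans/(_ (Dtg k I).2); rewrite ltxx.
Qed.

Lemma measurable_setI_ge t : measurable (D `&` [set x | t <= g x]).
Proof. by rewrite setI_ge_bigcap; apply: bigcapT_measurable. Qed.

Variable eps : R.
Hypothesis eps_gt0 : 0 < eps.

Let heavy := [set t | (eps%:E < P (above t))%E].

Let heavy_nonempty : (eps%:E < P D)%E -> heavy !=set0.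
Proof.
move=> epsD; apply/set0P/negP => /eqP heavy0; move: epsD; apply/negP; rewrite -leNgt.
have -> : D = \bigcup_k above (- k%:R).
  apply/seteqP; split=> [x Dx|x [k _ []//]].
  exists (Num.bound `|g x|) => //; split=> //=.
  exact/ltrNnormlW/archi_boundP.
apply: probability_bigcup_le => [k|m n mn|k]; first exact: measurable_above.
  by apply: above_antitone; rewrite lerN2 ler_nat.
rewrite leNgt; apply/negP => heavy_k.
by have : heavy (- k%:R) by []; rewrite heavy0.
Qed.

Let heavy_ubound : has_ubound heavy.
Proof.
apply: contrapT => unbounded.
have heavy_nat k : (eps%:E <= P (above k%:R))%E.
  have [t heavy_t kt] : exists2 t, heavy t & k%:R < t.
    apply: contrapT => none; apply: unbounded; exists k%:R => t heavy_t.
    by rewrite leNgt; apply/negP => kt; apply: none; exists t.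
  apply: le_trans (ltW heavy_t) _.
  by apply: le_measure; rewrite ?inE; [apply: measurable_above..|apply/above_antitone/ltW].
have : (eps%:E <= P (\bigcap_k above k%:R))%E.
  apply: probability_bigcap_ge heavy_nat => [k|m n mn]; first exact: measurable_above.
  by apply: above_antitone; rewrite ler_nat.
have -> : \bigcap_k above k%:R = set0.
  apply/seteqP; split=> [x ab|//]; have [_ /=] := ab (Num.bound `|g x|) I.
  by move=> /lt_trans/(_ (ltr_normlW (archi_boundP (normr_ge0 _)))); rewrite ltxx.
by rewrite measure0 lee_fin leNgt eps_gt0.
Qed.

Lemma exists_quantile : (eps%:E < P D)%E ->
  exists t, (P (D `&` [set x | (t < g x)%R]) <= eps%:E)%E /\
            (eps%:E <= P (D `&` [set x | (t <= g x)%R]))%E.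
Proof.
move=> epsD; have heavy_sup : has_sup heavy by split; [apply: heavy_nonempty|].
have invS_antitone m n : (m <= n)%N -> n.+1%:R^-1 <= m.+1%:R^-1 :> R.
  by move=> mn; rewrite lef_pV2 ?posrE // ler_nat ltnS.
exists (sup heavy); split.
  rewrite [X in P X]above_shift; apply: probability_bigcup_le => [k|m n mn|k].
  - exact: measurable_above.
  - by apply: above_antitone; rewrite lerD2l invS_antitone.
  - rewrite leNgt; apply/negP => /(sup_upper_bound heavy_sup).
    by rewrite -subr_ge0 opprD addNKr oppr_ge0 leNgt invr_gt0 ltr0Sn.
rewrite setI_ge_bigcap; apply: probability_bigcap_ge => [k|m n mn|k].
- exact: measurable_above.
- by apply: above_antitone; rewrite lerD2l lerN2 invS_antitone.
- have inv_gt0 : 0 < k.+1%:R^-1 :> R by rewrite invr_gt0.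
  have [t heavy_t tsup] := sup_adherent inv_gt0 heavy_sup.
  apply: le_trans (ltW heavy_t) _.
  by apply: le_measure; rewrite ?inE; [apply: measurable_above..|apply/above_antitone/ltW].
Qed.

End quantile.

Lemma gen_max_ge (R : realType) (s : seq R) (r : nat) (t : R) : (0 < r)%N ->
  (r <= count (>= t) s)%N -> t <= gen_max r s.
Proof.
move=> r_gt0 r_le_count; rewrite /gen_max; set s' := sort _ s.
have {}r_le_count : (r <= count (>= t) s')%N.
  by rewrite (permP (permEl (perm_sort _ s))).
have s'_sorted : sorted (>=%R) s' by apply: sort_sorted => a b; apply: le_total.
have r_lt_size : (r.-1 < size s')%N.
  by rewrite prednK //; apply: leq_trans r_le_count (count_size _ _).
move: r_le_count; apply: contraTT; rewrite -ltNge -ltnNge => nth_lt_t.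
rewrite -(prednK r_gt0) ltnS.
have drop_below : count (>= t) (drop r.-1 s') = 0%N.
  apply/eqP; rewrite -leqn0 leqNgt -has_count; apply/hasPn => x /(nthP 0)[j].
  rewrite size_drop ltn_subRL => j_lt <-; rewrite nth_drop -ltNge.
  apply: le_lt_trans nth_lt_t.
  have ge_trans : transitive (>=%R : rel R) by move=> ? ? ? /[swap]; apply: le_trans.
  apply: (sorted_leq_nth ge_trans lexx 0 s'_sorted) (leq_addr _ _) => //.
rewrite -(cat_take_drop r.-1 s') count_cat drop_below addn0.
by apply: leq_trans (count_size _ _) _; rewrite size_take r_lt_size.
Qed.

Lemma probability_setC_ge (R : realType) (d : measure_display) (T : measurableType d)
    (Q : probability T R) (A : set T) (c : R) :
  measurable A -> (Q A <= c%:E)%E -> ((1 - c)%:E <= Q (~` A))%E.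
Proof.
move=> mA QA_le; rewrite probability_setC // -(fineK (fin_num_measure Q _ mA)).
by rewrite -EFinB lee_fin lerD2l lerN2 -lee_fin fineK ?fin_num_measure.
Qed.

Definition neg_label {X : Type} : set (X * bool) := [set p | p.2 = false].

Lemma measurable_neg_label d (X : measurableType d) : measurable (@neg_label X).
Proof. by have := @measurable_snd _ _ X bool measurableT [set false] I; rewrite setTI. Qed.

Section S_eps.
Variables (R : realType) (d : measure_display) (X : measurableType d).
Variables (f : X -> R -> R) (Omega : Type) (n r : nat).
Variable Z : 'I_n -> Omega -> (X * bool)%type.
Hypotheses (hf : scalable_classifier f)
  (hfmeas : forall rho : R, measurable_fun setT (fun x => f x rho)).

Let neg_rho_bar_gtE t : neg_label `&` [set p | t < rho_bar f p.1] =
  neg_label `&` (fst @^-1` [set x | f x t < 0]).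
Proof. by apply/seteqP; split=> p [neg_p]; rewrite /= lt0_rho_bar. Qed.

Lemma measurable_neg_rho_bar_gt t :
  measurable (neg_label `&` [set p : X * bool | t < rho_bar f p.1]).
Proof.
rewrite neg_rho_bar_gtE; apply: measurableI; first exact: measurable_neg_label.
rewrite -[_ @^-1` _]setTI; apply: measurable_fst => //.
have -> : [set x | f x t < 0] = (fun x => f x t) @^-1` `]-oo, 0[.
  by apply/seteqP; split=> x /=; rewrite in_itv.
by rewrite -[X in measurable X]setTI; apply: hfmeas.
Qed.

Lemma S_eps_neg_sub (w : Omega) :
  measurable [set p : X * bool | p.2 = false /\ S_eps r f Z w p.1] /\
  [set p : X * bool | p.2 = false /\ S_eps r f Z w p.1] `<=` neg_label.
Proof.
rewrite /S_eps; case: ifP => _; last first.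
  have -> : [set p : X * bool | p.2 = false /\ setT p.1] = neg_label.
    by apply/seteqP; split=> [p []|p neg_p].
  by split; [apply: measurable_neg_label|].
split=> [|p []//].
by have := measurable_neg_rho_bar_gt (gen_max r (neg_scores f Z w)); rewrite neg_rho_bar_gtE.
Qed.

Lemma S_eps_neg_sub_gt (w : Omega) (t : R) : (0 < r)%N ->
  (r <= #|[pred i | `[< (neg_label `&` [set p | (t <= rho_bar f p.1)%R]) (Z i w) >]]|)%N ->
  [set p : X * bool | p.2 = false /\ S_eps r f Z w p.1] `<=`
    neg_label `&` [set p | t < rho_bar f p.1].
Proof.
move=> r_gt0 r_le_hits.
have r_le_count : (r <= count (>= t) (neg_scores f Z w))%N.
  apply: leq_trans r_le_hits _.
  rewrite /neg_scores count_map count_filter cardE /enum_mem size_filter filter_predT.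
  by apply: sub_count => i /asboolP[/= neg ts_le]; rewrite /= neg ts_le.
have large : (r <= size (neg_scores f Z w))%N := leq_trans r_le_count (count_size _ _).
rewrite /S_eps large => p [neg_p /=]; rewrite lt0_rho_bar // => gen_max_lt.
by split=> //=; apply: le_lt_trans (gen_max_ge r_gt0 r_le_count) gen_max_lt.
Qed.

End S_eps.

Theorem theorem1 (R : realType) (d d' : measure_display)
  (X : measurableType d) (Omega : measurableType d')
  (P : probability (X * bool)%type R) (Q : probability Omega R)
  (f : X -> R -> R)
  (hf : scalable_classifier f)
  (hfmeas : forall rho : R, measurable_fun setT (fun x => f x rho))
  (n_c : nat) (Z : 'I_n_c -> Omega -> (X * bool)%type)
  (hZ : iid_sample Q P Z)
  (eps delta : R) (heps : 0 < eps < 1) (hdelta : 0 < delta < 1)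
  (r : nat) (hr : (1 <= r <= n_c)%N)
  (hB : binom_cdf r.-1 n_c eps <= delta) :
  exists E : set Omega, measurable E /\ ((1 - delta)%:E <= Q E)%E /\
    E `<=` [set w | (P [set p : X * bool | p.2 = false /\ S_eps r f Z w p.1]
                     <= eps%:E)%E].
Proof.
have [eps_gt0 _] := andP heps; have [delta_gt0 _] := andP hdelta; have [r_gt0 _] := andP hr.
have m_above := measurable_neg_rho_bar_gt hf hfmeas.
have [PD_le|PD_gt] := leP (P neg_label) eps%:E.
  exists setT; split=> //; split; first by rewrite probability_setT lee_fin; lra.
  move=> w _ /=; apply: le_trans PD_le.
  have [m_target target_sub] := S_eps_neg_sub r Z hf hfmeas w.
  by apply: le_measure; rewrite ?inE //; apply: measurable_neg_label.
have [ts [above_le at_least_ge]] := exists_quantile m_above eps_gt0 PD_gt.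
have mA := measurable_setI_ge m_above ts.
have [mZ Z_indep] := hZ.
have [m_few Q_few] := iid_sample_few_hits mZ Z_indep mA r.-1.
set few := [set w | _] in m_few Q_few.
exists (~` few); split; first exact: measurableC.
split.
  apply: probability_setC_ge m_few _; apply: le_trans Q_few _; rewrite lee_fin.
  apply: le_trans hB; apply: binom_cdf_le; first exact: ltW.
    by rewrite -lee_fin fineK // fin_num_measure.
  by rewrite -lee_fin fineK ?fin_num_measure ?probability_le1.
move=> w /= /negP; rewrite -ltnNge prednK // => many_hits.
apply: le_trans above_le; have [m_target _] := S_eps_neg_sub r Z hf hfmeas w.
by apply: le_measure; rewrite ?inE //; apply: S_eps_neg_sub_gt.
Qed.
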